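(* Let $m\ge1$, let $p_1,\dots,p_m\ge 0$ with $p_1+\cdots+p_m=1$, and let $S$ be a finite nonempty word on $[m]$ all of whose letters have positive probability. Roll a die showing face $i$ with probability $p_i$ independently until $S$ first appears as a block of consecutive outcomes, and let $Y$ be the number of rolls. Then \[ \operatorname{Var}(Y) = E(Y^2)-E(Y)^2 = \left(\sum_{R\in\operatorname{overlap}(S)} \frac{1}{P(R)} \right)^2 + \sum_{R\in\operatorname{overlap}(S)} \frac{(1-|R|)^2-|R|^2}{P(R)}. \]
   Context: For a word $w=w_1\cdots w_\ell$, $|w|=\ell$ and $P(w)=p_{w_1}\cdots p_{w_\ell}$. An overlap of $S$ is a nonempty word that is both a prefix and a suffix of $S$ (including $S$ itself); $\operatorname{overlap}(S)$ is the set of overlaps. *)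

From HB Require Import structures.
From mathcomp Require Import all_boot all_order all_algebra.
From mathcomp Require Import all_classical all_reals.
From mathcomp Require Import topology normedtype sequences.
Set Implicit Arguments. Unset Strict Implicit. Unset Printing Implicit Defensive.
Import Order.TTheory GRing.Theory Num.Theory.
Local Open Scope ring_scope.

Definition wprob (R : pzRingType) (m : nat) (p : 'I_m -> R) (w : seq 'I_m) : R :=
  \prod_(i <- w) p i.

Definition overlap (m : nat) (S : seq 'I_m) : seq (seq 'I_m) :=
  [seq take k S | k <- iota 1 (size S) & take k S == drop (size S - k) S].

(* S appears for the first time as a block ending exactly at the last letter
   of w: S is a suffix of w and S is not a block of w with its last letter removed. *)
Definition first_occ (m : nat) (S w : seq 'I_m) : bool :=
  suffix S w && ~~ infix S (take (size w).-1 w).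

(* P(Y = n): the probability that S first appears after exactly n rolls,
   i.e. the total probability of outcomes (w_1..w_n) of the first n rolls
   in which S first occurs ending at roll n. *)
Definition probY (R : pzRingType) (m : nat) (p : 'I_m -> R) (S : seq 'I_m) (n : nat) : R :=
  \sum_(w : n.-tuple 'I_m | first_occ S w) wprob p w.

From mathcomp Require Import all_boot all_order all_algebra.
From mathcomp Require Import all_classical all_reals.
From mathcomp Require Import topology normedtype sequences.
From mathcomp Require Import ring lra zify.
Set Implicit Arguments. Unset Strict Implicit. Unset Printing Implicit Defensive.
Import Order.TTheory GRing.Theory Num.Theory.
Import numFieldNormedType.Exports.
Local Open Scope classical_set_scope.
Local Open Scope ring_scope.

(* Write a_n = P(Y > n) and q_n = P(Y = n), so that q_{n+1} = a_n - a_{n+1}.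
   If a word w of length n avoids S, then in w ++ S the word S occurs for the
   first time after exactly one prefix take j S of S, and that prefix is then
   an overlap of S. Summing over w gives
     a_n = sum_{R in overlap(S)} q_{n+|R|} / P(R).
   Hence a_n <= C (a_n - a_{n+|S|}) with C = sum_R 1/P(R), so a_n decays
   geometrically and Y has all moments. Summing the identity over n, and
   against n, gives E(Y) = sum_n a_n = C and
   (E(Y^2) - E(Y))/2 = sum_n n a_n = sum_R (C - |R|)/P(R), whence the variance. *)

Section GeometricDecay.
Variable R : realType.

Lemma mulrSn_expr_le (t : R) n : 0 <= t -> t < 1 -> n.+1%:R * t ^+ n <= (1 - t)^-1.
Proof.
move=> t0 t1; rewrite -[X in _ <= X]mul1r ler_pdivlMr ?subr_gt0 //.
suff : n.+1%:R * t ^+ n * (1 - t) <= 1 - t ^+ n.+1.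
  by have := exprn_ge0 n.+1 t0; lra.
elim: n => [|n IH]; first by rewrite expr0 expr1 !mul1r.
rewrite !exprS mulrS in IH *; set x := t ^+ n in IH *.
have x1 : t * x <= 1 by rewrite /x -exprS exprn_ile1 // ltW.
have : 0 <= (1 - t) * (1 - t * x) by apply: mulr_ge0; lra.
have := ler_wpM2l t0 IH.
nra.
Qed.

Lemma mulrSn_expr_cvg0 (t : R) : 0 <= t -> t < 1 -> (fun n => n.+1%:R * t ^+ n) @ \oo --> 0.
Proof.
move=> t0 t1; set s := Num.sqrt t.
have s0 : 0 <= s by exact: sqrtr_ge0.
have s1 : s < 1 by rewrite -sqrtr1 ltr_sqrt.
have tE n : t ^+ n = s ^+ n * s ^+ n by rewrite -exprMn -expr2 sqr_sqrtr.
apply: (squeeze_cvgr (f := fun=> 0) (h := fun n => (1 - s)^-1 * s ^+ n)).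
- apply: nearW => n; rewrite tE mulrA; apply/andP; split.
    by rewrite !mulr_ge0 ?exprn_ge0.
  by rewrite ler_wpM2r ?exprn_ge0 ?mulrSn_expr_le.
- exact: cvg_cst.
- rewrite -(mulr0 (1 - s)^-1); apply: cvgMl_tmp; apply: cvg_expr.
  by rewrite ger0_norm.
Qed.

Lemma sqr_mulrSn_expr_cvg0 (t : R) : 0 <= t -> t < 1 ->
  (fun n => n.+1%:R ^+ 2 * t ^+ n) @ \oo --> 0.
Proof.
move=> t0 t1; set s := Num.sqrt t.
have s0 : 0 <= s by exact: sqrtr_ge0.
have s1 : s < 1 by rewrite -sqrtr1 ltr_sqrt.
have sE n : n.+1%:R ^+ 2 * t ^+ n = (n.+1%:R * s ^+ n) * (n.+1%:R * s ^+ n).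
  by rewrite -expr2 exprMn -exprM mulnC exprM sqr_sqrtr.
under eq_cvg do rewrite sE.
have h := mulrSn_expr_cvg0 s0 s1.
have := cvgM h h; rewrite mulr0; exact.
Qed.

Lemma divn_cvgny k : (0 < k)%N -> (fun n => (n %/ k)%N) @ \oo --> \oo.
Proof.
move=> k0; apply/cvgnyPge => A; near=> n; rewrite leq_divRL //.
by near: n; exact: nbhs_infty_ge.
Unshelve. all: end_near. Qed.

Lemma le_expr_divn (a : nat -> R) (k : nat) (r : R) : 0 <= r ->
  (forall n, a n.+1 <= a n) -> a 0%N <= 1 -> (forall n, a (n + k)%N <= r * a n) ->
  forall n, a n <= r ^+ (n %/ k)%N.
Proof.
move=> r0 /nonincreasing_seqP a_decr a01 a_contr n.
have a_mulk i : a (i * k)%N <= r ^+ i.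
  elim: i => [|i IH]; first by rewrite mul0n expr0.
  by rewrite mulSn addnC exprS (le_trans (a_contr _)) // ler_wpM2l.
exact: le_trans (a_decr _ _ (leq_divM n k)) (a_mulk _).
Qed.

Lemma sqr_mulrSn_cvg0_contract (a : nat -> R) (k : nat) (r : R) :
  (0 < k)%N -> 0 <= r -> r < 1 -> (forall n, 0 <= a n) ->
  (forall n, a n.+1 <= a n) -> a 0%N <= 1 -> (forall n, a (n + k)%N <= r * a n) ->
  (fun n => n.+1%:R ^+ 2 * a n) @ \oo --> 0.
Proof.
move=> k0 r0 r1 a0 a_decr a01 a_contr.
pose g i := k%:R ^+ 2 * ((i.+1)%:R ^+ 2 * r ^+ i).
have g_cvg : (g \o (fun n => (n %/ k)%N)) @ \oo --> 0.
  apply: cvg_comp (divn_cvgny k0) _; rewrite -(mulr0 (k%:R ^+ 2)).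
  by apply: cvgMl_tmp; exact: sqr_mulrSn_expr_cvg0.
apply: (squeeze_cvgr (f := fun=> 0) (h := g \o (fun n => (n %/ k)%N))) => //;
  last exact: cvg_cst.
apply: nearW => n; rewrite mulr_ge0 ?exprn_ge0 //=.
rewrite /g mulrA -exprMn -natrM; apply: ler_pM.
- exact: exprn_ge0.
- exact: a0.
- by rewrite lerXn2r ?nnegrE // ler_nat mulnC (ltn_ceil _ k0).
- exact: le_expr_divn.
Qed.

End GeometricDecay.

Lemma sum_shift_vanishing (V : nmodType) (f : nat -> V) (j N : nat) :
  (forall n, (n < j)%N -> f n = 0) ->
  \sum_(0 <= n < N) f (n + j)%N = \sum_(0 <= n < N + j) f n.
Proof.
move=> f0; rewrite [RHS](big_cat_nat (n := j)) ?leq_addl //=.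
have -> : \sum_(0 <= n < j) f n = 0 by rewrite big_nat big1 // => n /andP[_ /f0].
by rewrite add0r -[in RHS](add0n j) big_addn add0n addnK.
Qed.

Section TailMoments.
Variables (R : realType) (a q : nat -> R) (k : nat) (P : pred nat) (c : nat -> R).
Hypotheses (k_gt0 : (0 < k)%N) (q_ge0 : forall n, 0 <= q n)
  (q_small : forall n, (n < k)%N -> q n = 0) (qS : forall n, q n.+1 = a n - a n.+1)
  (a0 : a 0%N = 1) (c_ge0 : forall j, P j -> 0 <= c j)
  (a_decomp : forall n, a n = \sum_(j <- iota 1 k | P j) c j * q (n + j)%N).

Let C := \sum_(j <- iota 1 k | P j) c j.

Let q0 : q 0%N = 0. Proof. exact: q_small. Qed.

Lemma tail_decr n : a n.+1 <= a n.
Proof. by have := q_ge0 n.+1; rewrite qS subr_ge0. Qed.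

Lemma tail_ge0 n : 0 <= a n.
Proof. by rewrite a_decomp; apply: sumr_ge0 => j Pj; rewrite mulr_ge0 ?c_ge0. Qed.

Lemma tail_contract n : a (n + k)%N <= C / (C + 1) * a n.
Proof.
have C0 : 0 <= C by exact: sumr_ge0.
have /nonincreasing_seqP a_decr := tail_decr.
have q_le j : j \in iota 1 k -> q (n + j)%N <= a n - a (n + k)%N.
  rewrite mem_iota => /andP[j1 jk]; rewrite -(prednK j1) addnS qS.
  by apply: lerB; apply: a_decr; lia.
have : a n <= C * (a n - a (n + k)%N).
  rewrite {1}a_decomp /C mulr_suml big_seq_cond [X in _ <= X]big_seq_cond.
  by apply: ler_sum => j /andP[jJ Pj]; rewrite ler_wpM2l ?c_ge0 ?q_le.
have := a_decr _ _ (leq_addr k n); rewrite mulrAC ler_pdivlMr ?ltr_wpDl //.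
nra.
Qed.

Lemma tail_weighted_cvg0 (w : nat -> R) : (forall n, 0 <= w n <= n.+1%:R ^+ 2) ->
  (fun n => w n * a n) @ \oo --> 0.
Proof.
move=> w_bnd; have C0 : 0 <= C by exact: sumr_ge0.
have r0 : 0 <= C / (C + 1) by rewrite divr_ge0 ?addr_ge0.
have r1 : C / (C + 1) < 1 by rewrite ltr_pdivrMr ?mul1r ?ltrDl ?ltr_wpDl.
have a01 : a 0%N <= 1 by rewrite a0.
have := sqr_mulrSn_cvg0_contract k_gt0 r0 r1 tail_ge0 tail_decr a01 tail_contract.
apply: (squeeze_cvgr (f := fun=> 0)); last exact: cvg_cst.
apply: nearW => n; have /andP[w0 w1] := w_bnd n.
by rewrite mulr_ge0 ?tail_ge0 //= ler_wpM2r ?tail_ge0.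
Qed.

Lemma sum_q N : \sum_(0 <= n < N.+1) q n = 1 - a N.
Proof.
elim: N => [|N IH]; first by rewrite big_nat1 q0 a0 subrr.
by rewrite big_nat_recr //= IH qS addrA subrK.
Qed.

Lemma sum_nq N : \sum_(0 <= n < N.+1) n%:R * q n = \sum_(0 <= n < N) a n - N%:R * a N.
Proof.
elim: N => [|N IH]; first by rewrite big_nat1 q0 big_geq // !mul0r subrr.
rewrite big_nat_recr //= IH qS big_nat_recr //= -natr1.
move: (\sum_(0 <= n < N) a n) => A; ring.
Qed.

Lemma sum_sqrn_q N : \sum_(0 <= n < N.+1) n%:R ^+ 2 * q n =
  2 * \sum_(0 <= n < N) n%:R * a n + \sum_(0 <= n < N) a n - N%:R ^+ 2 * a N.
Proof.
elim: N => [|N IH].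
  by rewrite big_nat1 q0 big_geq // big_geq // !mulr0 expr0n mul0r !addr0 subrr.
rewrite big_nat_recr //= IH qS !big_nat_recr //= -(natr1 N).
move: (\sum_(0 <= n < N) n%:R * a n) (\sum_(0 <= n < N) a n) => B A; ring.
Qed.

Lemma sum_tail N :
  \sum_(0 <= n < N) a n = \sum_(j <- iota 1 k | P j) c j * \sum_(0 <= n < N + j) q n.
Proof.
under eq_bigr do rewrite a_decomp; rewrite exchange_big /=.
rewrite big_seq_cond [RHS]big_seq_cond; apply: eq_bigr => j /andP[+ _].
rewrite mem_iota => /andP[_ jk].
by rewrite -mulr_sumr sum_shift_vanishing // => n nj; apply: q_small; lia.
Qed.

Lemma sum_n_tail N : \sum_(0 <= n < N) n%:R * a n = \sum_(j <- iota 1 k | P j)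
  c j * (\sum_(0 <= n < N + j) n%:R * q n - j%:R * \sum_(0 <= n < N + j) q n).
Proof.
under eq_bigr do rewrite a_decomp mulr_sumr; rewrite exchange_big /=.
rewrite big_seq_cond [RHS]big_seq_cond; apply: eq_bigr => j /andP[+ _].
rewrite mem_iota => /andP[_ jk]; rewrite mulr_sumr -sumrB -sum_shift_vanishing.
  by rewrite mulr_sumr; apply: eq_bigr => n _; rewrite natrD; ring.
by move=> n nj; rewrite q_small ?mulr0 ?subrr //; lia.
Qed.

Let cvg_sum_weighted (f : nat -> nat -> R) (l : nat -> R) :
  (forall j, P j -> f j n @[n --> \oo] --> l j) ->
  \sum_(j <- iota 1 k | P j) c j * f j n @[n --> \oo] -->
  \sum_(j <- iota 1 k | P j) c j * l j.
Proof.
move=> fl; apply: cvg_big => [|j /fl]; [exact: add_continuous | exact: cvgMl_tmp].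
Qed.

Lemma cvg_sum_q : (fun N => \sum_(0 <= n < N) q n) @ \oo --> (1 : R).
Proof.
rewrite -cvg_shiftS /=; under eq_cvg do rewrite sum_q.
have : (fun n => 1 * a n) @ \oo --> 0.
  by apply: tail_weighted_cvg0 => n; rewrite ler01 -natrX ler1n expn_gt0.
under eq_cvg do rewrite mul1r.
by move=> /(cvgB (cvg_cst (1 : R))); rewrite subr0.
Qed.

Lemma cvg_sum_tail : (fun N => \sum_(0 <= n < N) a n) @ \oo --> C.
Proof.
under eq_cvg do rewrite sum_tail.
rewrite (_ : C = \sum_(j <- iota 1 k | P j) c j * 1); last first.
  by apply: eq_bigr => j _; rewrite mulr1.
by apply: cvg_sum_weighted => j _; have := cvg_sum_q; rewrite -(cvg_shiftn j).
Qed.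

Lemma cvg_sum_nq : (fun N => \sum_(0 <= n < N) n%:R * q n) @ \oo --> C.
Proof.
rewrite -cvg_shiftS /=; under eq_cvg do rewrite sum_nq.
have : (fun n => n%:R * a n) @ \oo --> 0.
  apply: tail_weighted_cvg0 => n; rewrite ler0n -natrX ler_nat.
  by rewrite (leq_trans (leqnSn n)) // leq_pmulr.
by move=> /(cvgB cvg_sum_tail); rewrite subr0.
Qed.

Lemma cvg_sum_n_tail : (fun N => \sum_(0 <= n < N) n%:R * a n) @ \oo -->
  \sum_(j <- iota 1 k | P j) c j * (C - j%:R).
Proof.
under eq_cvg do rewrite sum_n_tail.
apply: cvg_sum_weighted => j _; apply: cvgB.
  by have := cvg_sum_nq; rewrite -(cvg_shiftn j).
rewrite -[X in _ --> X]mulr1; apply: cvgMl_tmp.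
by have := cvg_sum_q; rewrite -(cvg_shiftn j).
Qed.

Lemma cvg_sum_sqrn_q : (fun N => \sum_(0 <= n < N) n%:R ^+ 2 * q n) @ \oo -->
  2 * \sum_(j <- iota 1 k | P j) c j * (C - j%:R) + C.
Proof.
rewrite -cvg_shiftS /=; under eq_cvg do rewrite sum_sqrn_q.
have : (fun n => n%:R ^+ 2 * a n) @ \oo --> 0.
  by apply: tail_weighted_cvg0 => n; rewrite exprn_ge0 //= -!natrX ler_nat leq_exp2r.
by move=> /(cvgB (cvgD (cvgMl_tmp (a := 2) cvg_sum_n_tail) cvg_sum_tail));
  rewrite subr0.
Qed.

Lemma tail_moments : exists EY EY2 : R,
  [/\ (fun N => \sum_(0 <= n < N) q n) @ \oo --> (1 : R),
      (fun N => \sum_(0 <= n < N) n%:R * q n) @ \oo --> EY,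
      (fun N => \sum_(0 <= n < N) n%:R ^+ 2 * q n) @ \oo --> EY2
    & EY2 - EY ^+ 2 =
      C ^+ 2 + \sum_(j <- iota 1 k | P j) ((1 - j%:R) ^+ 2 - j%:R ^+ 2) * c j].
Proof.
exists C, (2 * \sum_(j <- iota 1 k | P j) c j * (C - j%:R) + C).
split; [exact: cvg_sum_q | exact: cvg_sum_nq | exact: cvg_sum_sqrn_q |].
set D := \sum_(j <- iota 1 k | P j) j%:R * c j.
have -> : \sum_(j <- iota 1 k | P j) c j * (C - j%:R) =
    (\sum_(j <- iota 1 k | P j) c j) * C - D.
  by rewrite mulr_suml -sumrB; apply: eq_bigr => j _; ring.
have -> : \sum_(j <- iota 1 k | P j) ((1 - j%:R) ^+ 2 - j%:R ^+ 2) * c j =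
    \sum_(j <- iota 1 k | P j) c j - 2 * D.
  by rewrite mulr_sumr -sumrB; apply: eq_bigr => j _; ring.
rewrite -/C; ring.
Qed.

End TailMoments.

Section SumWords.
Variables (T : finType) (V : nmodType).

Definition sum_words n (F : seq T -> V) : V := \sum_(w : n.-tuple T) F w.

Lemma sum_words0 F : sum_words 0 F = F [::].
Proof.
rewrite /sum_words (bigD1 [tuple]) //= big1 ?addr0 // => t.
by rewrite [t]tuple0 => /eqP.
Qed.

Lemma sum_wordsS n F :
  sum_words n.+1 F = \sum_(i : T) sum_words n (fun w => F (i :: w)).
Proof.
rewrite /sum_words pair_big_dep /=.
rewrite (reindex (fun x : T * n.-tuple T => cons_tuple x.1 x.2)) //=.
exists (fun t : n.+1.-tuple T => (thead t, [tuple of behead t])).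
  by move=> [i w] _ /=; congr pair; apply: val_inj.
by move=> t _; apply: val_inj => /=; rewrite [in RHS](tuple_eta t).
Qed.

Lemma sum_words_cat n j F :
  sum_words (n + j) F = sum_words n (fun w => sum_words j (fun v => F (w ++ v))).
Proof.
elim: n F => [|n IH] F; first by rewrite sum_words0.
by rewrite addSn !sum_wordsS; apply: eq_bigr => i _; rewrite IH.
Qed.

Lemma sum_words_rcons n F :
  sum_words n.+1 F = sum_words n (fun w => \sum_(i : T) F (rcons w i)).
Proof.
rewrite -addn1 sum_words_cat; apply: eq_bigr => w _.
by rewrite sum_wordsS; apply: eq_bigr => i _; rewrite sum_words0 cats1.
Qed.

Lemma sum_words_single (s : seq T) G :
  (forall v, size v = size s -> v != s -> G v = 0) -> sum_words (size s) G = G s.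
Proof.
move=> G0; rewrite /sum_words (bigD1 (in_tuple s)) //= big1 ?addr0 // => v vs.
by apply: G0; rewrite ?size_tuple // -(inj_eq val_inj).
Qed.

End SumWords.

Section FirstOccurrence.
Variables (m : nat) (S : seq 'I_m).

Definition is_overlap (j : nat) : bool := take j S == drop (size S - j) S.

Lemma first_occ_rcons w i :
  first_occ S (rcons w i) = infix S (rcons w i) && ~~ infix S w.
Proof.
rewrite /first_occ size_rcons -cats1 take_size_cat // cats1 infix_rconsl.
by case: (infix S w); rewrite ?andbF ?orbF.
Qed.

Lemma first_occ_rconsE (R : pzRingType) w i :
  (first_occ S (rcons w i))%:R = (infix S (rcons w i))%:R - (infix S w)%:R :> R.
Proof.
rewrite first_occ_rcons infix_rconsl.
by case: (infix S w); case: (suffix _ _); rewrite ?subrr ?subr0.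
Qed.

Lemma first_occ_cat_drop w v : first_occ S (w ++ v) -> (size v <= size S)%N ->
  v = drop (size S - size v) S.
Proof.
move=> /andP[Ssuf _] vS; move: Ssuf.
rewrite -{1}(cat_take_drop (size S - size v) S) suffix_catl ?size_drop ?subKn //.
by case/andP=> /eqP.
Qed.

Lemma sum_first_occ_take (R : pzRingType) w :
  \sum_(j <- iota 1 (size S)) (first_occ S (w ++ take j S))%:R = (~~ infix S w)%:R :> R.
Proof.
pose u j : R := (infix S (w ++ take j S))%:R.
transitivity (\sum_(0 <= i < size S) (u i.+1 - u i)).
  rewrite (iotaDl 1 0) big_map /index_iota subn0.
  apply: eq_big_seq => i; rewrite mem_iota add0n => /andP[_ iS].
  rewrite /u add1n -addn1 takeD; case def_d: (drop i S) => [|x d].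
    by move/(congr1 size): def_d; rewrite size_drop /=; lia.
  by rewrite /= take0 catA cats1 first_occ_rconsE.
rewrite telescope_sumr // /u take_size take0 cats0 suffix_infix.
by case: (infix S w); rewrite ?subrr ?subr0.
Qed.

End FirstOccurrence.

Lemma sum_words_indicator (T : finType) (R : pzSemiRingType) n (P : pred (seq T))
    (F : seq T -> R) :
  \sum_(w : n.-tuple T | P w) F w = sum_words n (fun w => (P w)%:R * F w) :> R.
Proof.
by rewrite big_mkcond; apply: eq_bigr => w _; case: (P w); rewrite ?mul1r ?mul0r.
Qed.

Section Rolls.
Variables (R : fieldType) (m : nat) (p : 'I_m -> R) (S : seq 'I_m).

Definition probY_gt n : R := \sum_(w : n.-tuple 'I_m | ~~ infix S w) wprob p w.

Lemma probYE n :
  probY p S n = sum_words n (fun w => (first_occ S w)%:R * wprob p w).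
Proof. exact: (@sum_words_indicator _ _ n (first_occ S)). Qed.

Lemma probY_gtE n :
  probY_gt n = sum_words n (fun w => (~~ infix S w)%:R * wprob p w).
Proof. exact: (@sum_words_indicator _ _ n (fun w => ~~ infix S w)). Qed.

Lemma wprob_cat u v : wprob p (u ++ v) = wprob p u * wprob p v.
Proof. by rewrite /wprob big_cat. Qed.

Lemma wprob_rcons w i : wprob p (rcons w i) = wprob p w * p i.
Proof. by rewrite -cats1 wprob_cat /wprob big_seq1. Qed.

Lemma wprob_neq0 w : (forall i, i \in w -> p i != 0) -> wprob p w != 0.
Proof. by move=> w0; rewrite /wprob prodf_seq_neq0; apply/allP. Qed.

Lemma probY_gt0 : S != [::] -> probY_gt 0 = 1.
Proof.
move=> S0; rewrite probY_gtE sum_words0 infixs0 (negbTE S0).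
by rewrite /wprob big_nil mulr1.
Qed.

Lemma probY_small n : (n < size S)%N -> probY p S n = 0.
Proof.
move=> nS; rewrite /probY big1 // => w /andP[/size_suffix].
by rewrite size_tuple leqNgt nS.
Qed.

Lemma probYS : \sum_(i < m) p i = 1 ->
  forall n, probY p S n.+1 = probY_gt n - probY_gt n.+1.
Proof.
move=> p1 n; rewrite probYE !probY_gtE !sum_words_rcons /sum_words -sumrB.
apply: eq_bigr => w _.
have -> : (~~ infix S w)%:R * wprob p w =
    \sum_i (~~ infix S w)%:R * wprob p (rcons w i).
  rewrite -mulr_sumr; under eq_bigr do rewrite wprob_rcons.
  by rewrite -mulr_sumr p1 mulr1.
rewrite -sumrB; apply: eq_bigr => i _; rewrite first_occ_rconsE.
by case: (infix S w); case: (infix S (rcons w i)); rewrite /=; ring.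
Qed.

Lemma probY_addn n j : (j <= size S)%N ->
  probY p S (n + j) = sum_words n (fun w =>
      (first_occ S (w ++ drop (size S - j) S))%:R * wprob p w) *
    wprob p (drop (size S - j) S).
Proof.
move=> jS; set s := drop (size S - j) S.
have sz : size s = j by rewrite size_drop subKn.
rewrite probYE sum_words_cat -sz {1 3}/sum_words mulr_suml.
apply: eq_bigr => w _.
rewrite (sum_words_single (s := s)) ?wprob_cat ?mulrA // => v vs vNs.
case fo: (first_occ S (w ++ v)); last by rewrite mul0r.
by move: vNs; rewrite (first_occ_cat_drop fo) vs ?sz ?eqxx.
Qed.

Hypothesis pS_neq0 : forall i, i \in S -> p i != 0.

Lemma wprob_take_neq0 j : wprob p (take j S) != 0.
Proof. by apply: wprob_neq0 => i /mem_take; exact: pS_neq0. Qed.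

Lemma sum_words_first_occ_take n j : (j <= size S)%N ->
  sum_words n (fun w => (first_occ S (w ++ take j S))%:R * wprob p w) =
  if is_overlap S j then (wprob p (take j S))^-1 * probY p S (n + j) else 0.
Proof.
move=> jS; rewrite /is_overlap; case: eqP => [ov | nov].
  by rewrite probY_addn // -ov mulrC mulfK ?wprob_take_neq0.
rewrite /sum_words big1 // => w _; case fo: (first_occ S _); rewrite ?mul0r //.
by case: nov; rewrite [LHS](first_occ_cat_drop fo) size_takel.
Qed.

Lemma probY_gt_overlap n : probY_gt n =
  \sum_(j <- iota 1 (size S) | is_overlap S j)
    (wprob p (take j S))^-1 * probY p S (n + j).
Proof.
rewrite probY_gtE big_mkcond /=.
transitivity (\sum_(j <- iota 1 (size S))
    sum_words n (fun w => (first_occ S (w ++ take j S))%:R * wprob p w)).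
  rewrite /sum_words exchange_big /=; apply: eq_bigr => w _.
  by rewrite -mulr_suml sum_first_occ_take.
apply: eq_big_seq => j; rewrite mem_iota => /andP[_ jS].
by rewrite sum_words_first_occ_take //; lia.
Qed.

End Rolls.

Theorem corollary4p11 (R : realType) (m : nat) (p : 'I_m -> R)
  (hm : (1 <= m)%N) (hp0 : forall i, 0 <= p i) (hp1 : \sum_(i < m) p i = 1)
  (S : seq 'I_m) (hS : S != [::]) (hSpos : forall i, i \in S -> 0 < p i) :
  exists EY EY2 : R,
    [/\ (fun N : nat => \sum_(0 <= n < N) probY p S n) @ \oo --> (1 : R),
        (fun N : nat => \sum_(0 <= n < N) n%:R * probY p S n) @ \oo --> EY,
        (fun N : nat => \sum_(0 <= n < N) (n%:R ^+ 2) * probY p S n) @ \oo --> EY2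
      & EY2 - EY ^+ 2 =
        (\sum_(T <- overlap S) (wprob p T)^-1) ^+ 2
        + \sum_(T <- overlap S)
            (((1 - (size T)%:R) ^+ 2 - (size T)%:R ^+ 2) / wprob p T)].
Proof.
have pS_neq0 i : i \in S -> p i != 0 by move/hSpos/lt0r_neq0.
have wprob_ge0 w : 0 <= wprob p w by exact: prodr_ge0.
have S_gt0 : (0 < size S)%N by rewrite lt0n size_eq0.
have q_ge0 n : 0 <= probY p S n by apply: sumr_ge0 => w _; exact: wprob_ge0.
have c_ge0 j : 0 <= (wprob p (take j S))^-1 by rewrite invr_ge0.
have q_small n : (n < size S)%N -> probY p S n = 0 by exact: probY_small.
have [EY [EY2 [cvg1 cvgEY cvgEY2 varY]]] := tail_moments S_gt0 q_ge0 q_small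
  (probYS S hp1) (probY_gt0 p hS) (fun j _ => c_ge0 j) (probY_gt_overlap pS_neq0).
exists EY, EY2; split => //.
rewrite varY /overlap !big_map !big_filter; congr (_ + _).
rewrite big_seq_cond [RHS]big_seq_cond; apply: eq_bigr => j /andP[+ _].
by rewrite mem_iota => /andP[_ jS]; rewrite size_takel //; lia.
Qed.
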